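(* Consider the system \[ \begin{aligned} \dot S_h(t)&=\beta_h-C_{vh}\frac{I_v(t)}{N_v(t)}S_h(t)-\mu_hS_h(t),\\ \dot I_h(t)&=C_{vh}\frac{I_v(t-\tau)}{N_v(t-\tau)}S_h(t-\tau)-\mu_hI_h(t),\\ \dot S_v(t)&=\beta_v-C_{hv}I_h(t)S_v(t)-\mu_vS_v(t),\\ \dot I_v(t)&=C_{hv}I_h(t)S_v(t)-\mu_vI_v(t), \end{aligned} \] with $N_v=S_v+I_v$, positive parameters $\beta_h,\beta_v,\mu_h,\mu_v,C_{vh},C_{hv}$ and $\tau\ge 0$. Let $R_0=\sqrt{C_{vh}C_{hv}\beta_h/(\mu_h^2\mu_v)}$, $S_v^0=\beta_v/\mu_v$, and, when $R_0>1$, let $E^*=(S_h^*,I_h^*,S_v^*,I_v^* )^T$ be the unique equilibrium with all components positive. Suppose $R_0>1$, $\theta\in(0,1)$, and let $(S_h(t),I_h(t),S_v(t),I_v(t))$ be the solution through an initial function $\varphi\in D$ satisfying $\limsup_{t\to\infty}I_h(t)\le\theta I_h^*$. Then \[ \liminf_{t\to\infty}S_v(t)\ge \bar S_v:=\frac{\beta_v}{\theta C_{hv}I_h^*+\mu_v}>S_v^*,\qquad \liminf_{t\to\infty}S_h(t)\ge \bar S_h:=\frac{\beta_h}{C_{vh}\left(1-\frac{\bar S_v}{S_v^0}\right)+\mu_h}>S_h^*. \]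
   Context: $C_+=\{\varphi\in C([-\tau,0],\mathbb{R}_+^4):\varphi_3(\theta)+\varphi_4(\theta)>0\ \forall\theta\in[-\tau,0]\}$ with the sup-norm, and $D=\{\varphi\in C_+:\varphi_2(0)>0\}$. The solution through $\varphi$ equals $\varphi$ on $[-\tau,0]$. *)

From HB Require Import structures.
From mathcomp Require Import all_boot all_order all_algebra.
From mathcomp Require Import all_classical all_reals all_analysis.
Set Implicit Arguments. Unset Strict Implicit. Unset Printing Implicit Defensive.
Import Order.TTheory GRing.Theory Num.Theory.
Import numFieldNormedType.Exports.
Local Open Scope classical_set_scope.
Local Open Scope ring_scope.

Section Model.
Variable R : realType.

Definition limsup_pinfty (f : R -> R) : \bar R :=
  limf_esup (fun t => (f t)%:E) (pinfty_nbhs R).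
Definition liminf_pinfty (f : R -> R) : \bar R :=
  limf_einf (fun t => (f t)%:E) (pinfty_nbhs R).

Definition in_D (tau : R) (p1 p2 p3 p4 : R -> R) : Prop :=
  [/\ [/\ {within `[-tau, 0], continuous p1}, {within `[-tau, 0], continuous p2},
      {within `[-tau, 0], continuous p3} & {within `[-tau, 0], continuous p4}],
      (forall th, -tau <= th <= 0 ->
         (0 <= p1 th) /\ (0 <= p2 th) /\ (0 <= p3 th) /\ (0 <= p4 th) /\ 0 < p3 th + p4 th)
    & 0 < p2 0].

Definition is_solution (bh bv muh muv Cvh Chv tau : R) (p1 p2 p3 p4 : R -> R)
    (Sh Ih Sv Iv : R -> R) : Prop :=
  [/\ (forall th, -tau <= th <= 0 ->
         [/\ Sh th = p1 th, Ih th = p2 th, Sv th = p3 th & Iv th = p4 th]),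
      [/\ {within `[-tau, +oo[, continuous Sh}, {within `[-tau, +oo[, continuous Ih},
          {within `[-tau, +oo[, continuous Sv} & {within `[-tau, +oo[, continuous Iv}]
    & forall t : R, 0 < t ->
      [/\ is_derive t (1:R) Sh (bh - Cvh * (Iv t / (Sv t + Iv t)) * Sh t - muh * Sh t),
          is_derive t (1:R) Ih (Cvh * (Iv (t - tau) / (Sv (t - tau) + Iv (t - tau)))
                              * Sh (t - tau) - muh * Ih t),
          is_derive t (1:R) Sv (bv - Chv * Ih t * Sv t - muv * Sv t)
        & is_derive t (1:R) Iv (Chv * Ih t * Sv t - muv * Iv t)]].

Definition is_equilibrium (bh bv muh muv Cvh Chv Sh Ih Sv Iv : R) : Prop :=
  [/\ bh - Cvh * (Iv / (Sv + Iv)) * Sh - muh * Sh = 0,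
      Cvh * (Iv / (Sv + Iv)) * Sh - muh * Ih = 0,
      bv - Chv * Ih * Sv - muv * Sv = 0
    & Chv * Ih * Sv - muv * Iv = 0].

Definition R0 (bh muh muv Cvh Chv : R) : R :=
  Num.sqrt (Cvh * Chv * bh / (muh ^+ 2 * muv)).

End Model.

From HB Require Import structures.
From mathcomp Require Import all_boot all_order all_algebra.
From mathcomp Require Import all_classical all_reals all_analysis.
From mathcomp Require Import ring lra.
Import Order.TTheory GRing.Theory Num.Theory.
Import numFieldNormedType.Exports.
Local Open Scope classical_set_scope.
Local Open Scope ring_scope.

(* Each of S_v, N_v = S_v + I_v and S_h solves an equation x' = b - c(t) x
   with b > 0 and c continuous, so it can only cross zero upwards: it is
   positive for t > 0.  A comparison argument shows that x' >= b - B x for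
   large t forces liminf x >= b / B.  Eventually I_h <= theta I_h^* + e, so
   S_v' >= beta_v - (theta C_hv I_h^* + mu_v + C_hv e) S_v and
   liminf S_v >= Sbar_v.  Since N_v' = beta_v - mu_v N_v, N_v tends to
   S_v^0, hence I_v / N_v = 1 - S_v / N_v is eventually at most
   1 - Sbar_v / S_v^0 + e, and the same comparison gives liminf S_h >= Sbar_h.
   The strict inequalities Sbar_v > S_v^*, Sbar_h > S_h^* follow from the
   equilibrium equations and theta < 1. *)

Section comparison.
Variable R : realType.
Implicit Types (f df : R -> R) (a b s t : R).

Lemma is_derive_continuous f t (d : R) : is_derive t 1 f d -> {for t, continuous f}.
Proof.
by move=> fd; apply/differentiable_continuous/derivable1_diffP; exact: ex_derive.
Qed.

Lemma near_interval {s} {P : R -> Prop} : (\forall x \near s, P x) ->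
  exists2 d, 0 < d & forall x, s - d < x < s + d -> P x.
Proof.
move=> /nbhs_ballP[d d0 Pd]; exists d => // x /andP[xl xr]; apply: Pd.
by rewrite /ball /= ltr_norml; apply/andP; split; lra.
Qed.

Lemma derive_gt0_lt f df a b : a < b ->
  (forall x, a < x < b -> is_derive x 1 f (df x) /\ 0 < df x) ->
  {within `[a, b], continuous f} -> f a < f b.
Proof.
move=> ab fd fc.
have [c /[!in_itv]/= /fd[_ dfc0] fba] :
    exists2 c, c \in `]a, b[ & f b - f a = df c * (b - a).
  by apply: MVT => // x /[!in_itv]/= /fd[].
by rewrite -subr_gt0 fba mulr_gt0 // subr_gt0.
Qed.

Lemma near_at_right_interval {a} {P : R -> Prop} : (\forall x \near a^'+, P x) ->
  exists2 d, 0 < d & forall x, a < x < a + d -> P x.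
Proof.
rewrite near_withinE => /near_interval[d d0 Pd]; exists d => // x /andP[ax xd].
by apply: Pd => //; apply/andP; split; lra.
Qed.

Lemma first_root f a t : a <= t -> (forall s, a <= s <= t -> {for s, continuous f}) ->
  0 < f a -> f t <= 0 ->
  exists s, [/\ a < s <= t, f s = 0 & forall u, a <= u < s -> 0 < f u].
Proof.
move=> at0 fc fa0 ft0.
pose Z := [set s | a <= s <= t /\ f s <= 0].
have Zt : Z t by split; rewrite ?at0 ?lexx.
have Zlb : has_lbound Z by exists a => s [/andP[]].
pose s := inf Z.
have as0 : a <= s by apply: lb_le_inf; [exists t | move=> u [/andP[]]].
have st : s <= t by exact: ge_inf.
have fpos u : a <= u < s -> 0 < f u.
  move=> /andP[au us]; rewrite ltNge; apply/negP => fu0.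
  have : s <= u by apply: ge_inf => //; split; rewrite ?au ?(le_trans (ltW us)).
  by rewrite leNgt us.
have fcs : {for s, continuous f} by apply: fc; rewrite as0 st.
have fs_le0 : f s <= 0.
  rewrite leNgt; apply/negP => /(cvgr_gt _ fcs) /near_interval[d d0 Pd].
  have [e Ze ed] := inf_adherent d0 (conj (ex_intro _ t Zt) Zlb).
  have se : s <= e by exact: ge_inf.
  have : 0 < f e by apply: Pd; rewrite -/s; lra.
  by case: Ze => _; rewrite leNgt => /negP.
have as1 : a < s.
  by rewrite lt_neqAle as0 andbT; apply: contraTneq fs_le0 => <-; rewrite -ltNge.
have fs_ge0 : 0 <= f s.
  apply: (cvgr_to_ge (cvg_at_left_filter fcs)); near=> u.
  by apply/ltW/fpos/andP; split; near: u; [exact: nbhs_left_ge | exact: nbhs_left_lt].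
by exists s; split; rewrite ?as1 ?st //; apply/eqP; rewrite eq_le fs_le0.
Unshelve. all: by end_near.
Qed.

Lemma gt0_of_derive_gt0_at_roots f df a :
  (forall t, a <= t -> is_derive t 1 f (df t)) ->
  (forall s, a < s -> f s = 0 -> \forall u \near s, 0 < df u) ->
  0 < f a -> forall t, a <= t -> 0 < f t.
Proof.
move=> fd froot fa0 t at0; rewrite ltNge; apply/negP => ft0.
have fc s : a <= s -> {for s, continuous f}.
  by move=> as0; apply: is_derive_continuous (fd s as0).
have [s [/andP[as0 st] fs0 fpos]] : exists s, [/\ a < s <= t, f s = 0 &
    forall u, a <= u < s -> 0 < f u].
  by apply: first_root => // s /andP[+ _]; exact: fc.
have [d d0 dfpos] := near_interval (froot s as0 fs0).
pose u := Num.max a (s - d / 2).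
have au : a <= u by rewrite le_max lexx.
have su : s - d / 2 <= u by rewrite le_max lexx orbT.
have us : u < s by rewrite gt_max as0 /=; lra.
have : f u < f s.
  apply: (@derive_gt0_lt _ df) => // [x /andP[ux xs]|].
    split; first by apply: fd; lra.
    by apply: dfpos; apply/andP; split; lra.
  apply: continuous_in_subspaceT => x /[!inE]/= /[!in_itv]/= /andP[ux _].
  by apply: fc; lra.
by rewrite fs0 ltNge ltW // fpos // au.
Qed.

Lemma inflow_gt0 f (c : R -> R) b a : 0 < b ->
  {within `[a, +oo[, continuous f} -> 0 <= f a ->
  (forall t, a < t -> is_derive t 1 f (b - c t * f t)) ->
  {in `]a, +oo[, continuous c} -> cvg (c x @[x --> a^'+]) ->
  forall t, a < t -> 0 < f t.
Proof.
move=> b0 fc fa0 fd cc cca.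
have [fcin fra] := (continuous_within_itvcyP a f).1 fc.
have [t1 at1 ft1] : exists2 t1, a < t1 & forall t, a < t <= t1 -> 0 < f t.
  have [fa_gt0|fa_le0] := ltP 0 (f a).
    have [d d0 fd0] := near_at_right_interval (cvgr_gt _ fra _ fa_gt0).
    by exists (a + d / 2) => [|t /andP[at0 td]]; [|apply: fd0]; lra.
  have fa_eq0 : f a = 0 by apply/eqP; rewrite eq_le fa_le0 fa0.
  have : (fun u => b - c u * f u) @ a^'+ --> b.
    rewrite -[X in _ --> X]subr0 -(mulr0 (lim (c @ a^'+))) -fa_eq0.
    by apply: cvgB; [exact: cvg_cst | apply: cvgM].
  move=> /cvgr_gt/(_ _ b0) /near_at_right_interval[d d0 dfd0].
  exists (a + d / 2) => [|t /andP[at0 td]]; first lra.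
  rewrite -fa_eq0 (@derive_gt0_lt _ (fun u => b - c u * f u)) //.
    by move=> x /andP[ax xt]; split; [apply: (fd x) | apply: dfd0]; lra.
  apply: continuous_subspaceW fc => x /=; rewrite !in_itv /= => /andP[-> _].
  by [].
move=> t at0; have [tt1|t1t] := leP t t1; first by apply: ft1; rewrite at0 tt1.
apply: (@gt0_of_derive_gt0_at_roots _ (fun u => b - c u * f u) t1); last 2 first.
- by apply: ft1; rewrite at1 lexx.
- exact: ltW.
- by move=> s t1s; apply: fd; lra.
move=> s t1s fs0.
have as0 : s \in `]a, +oo[ by rewrite in_itv /= andbT; lra.
have : (fun u => b - c u * f u) @ s --> b.
  rewrite -[X in _ --> X]subr0 -(mulr0 (c s)) -fs0.
  by apply: cvgB; [exact: cvg_cst | apply: cvgM; [exact: cc | exact: fcin]].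
by move=> /cvgr_gt; apply.
Qed.

Lemma eventually_gt_of_derive_ge f df b (B eps : R) : 0 < B -> 0 < eps ->
  (\forall t \near +oo, is_derive (t : R) 1 f (df t) /\ b - B * f t <= df t) ->
  \forall t \near +oo, b / B - eps < f t.
Proof.
move=> B0 eps0 [M [_ fM]]; set T := M + 1.
have fT t : T <= t -> is_derive t 1 f (df t) /\ b - B * f t <= df t.
  by move=> Tt; apply: fM; rewrite /T in Tt; lra.
have fc t : T <= t -> {for t, continuous f}.
  by move=> /fT[fd _]; exact: is_derive_continuous fd.
have [t1 Tt1 ft1] : exists2 t1, T <= t1 & b / B - eps < f t1.
  pose L := (`|b / B - f T| + 1) / (B * eps).
  have L0 : 0 < L by rewrite divr_gt0 ?mulr_gt0 // ltr_pwDr.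
  have BL : B * eps * L = `|b / B - f T| + 1 by rewrite mulrC divfK ?gt_eqF ?mulr_gt0.
  have [c /[!in_itv]/= /andP[Tc cTL]] : exists2 c, c \in `]T, T + L[ &
      f (T + L) - f T = df c * (T + L - T).
    apply: MVT; first by lra.
      by move=> x /[!in_itv]/= /andP[Tx _]; apply: (fT x _).1; lra.
    apply: continuous_in_subspaceT => x /[!inE]/= /[!in_itv]/= /andP[Tx _].
    exact: fc.
  have [fc_gt|fc_le] := ltP (b / B - eps) (f c); first by exists c => //; exact: ltW.
  rewrite (_ : T + L - T = L); last by lra.
  move=> fTL; exists (T + L); first by lra.
  have Bdfc : B * eps <= df c.
    apply: le_trans (fT c (ltW Tc)).2.
    by rewrite -(ler_pM2l B0) mulrBr mulrCA divff ?gt_eqF // mulr1 in fc_le; lra.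
  have := Bdfc; rewrite -(ler_pM2r L0) BL.
  have := ler_norm (b / B - f T); lra.
near=> t.
suff : 0 < f t - (b / B - eps) by lra.
apply: (@gt0_of_derive_gt0_at_roots (fun x => f x - (b / B - eps)) df t1); last 2 first.
- by rewrite subr_gt0.
- by near: t; apply: nbhs_pinfty_ge; exact: num_real.
- move=> x t1x; rewrite -[df x]subr0.
  by apply: is_deriveB; [apply: (fT x _).1; lra | exact: is_derive_cst].
move=> s t1s /eqP; rewrite subr_eq0 => /eqP fs.
have fsB : f s < b / B by lra.
have Ts : T < s by lra.
near=> u.
have Tu : T < u by near: u; exact: (cvgr_gt (f:=id) s cvg_id).
have fuB : f u < b / B by near: u; exact: (cvgr_lt _ (fc s (ltW Ts))).
apply: lt_le_trans (fT u (ltW Tu)).2.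
by rewrite subr_gt0 mulrC -ltr_pdivlMr.
Unshelve. all: by end_near.
Qed.

Lemma eventually_gt_of_derive_ge_approx f df b (A : R) : 0 < b -> 0 < A ->
  (\forall t \near +oo, is_derive (t : R) 1 f (df t)) ->
  (forall e, 0 < e -> \forall t \near +oo, b - (A + e) * f t <= df t) ->
  forall g, 0 < g -> \forall t \near +oo, b / A - g < f t.
Proof.
move=> b0 A0 fd fdf g g0.
(* chosen so that b / A - b / (A + e) <= b e / A ^+ 2 = g / 2 *)
pose e := g * A ^+ 2 / (b *+ 2).
have e0 : 0 < e by rewrite divr_gt0 ?mulr_gt0 ?exprn_gt0 ?mulrn_wgt0.
have Ae0 : 0 < A + e by rewrite addr_gt0.
have g20 : 0 < g / 2 by rewrite divr_gt0.
have gap : b / A - b / (A + e) <= g / 2.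
  have -> : b / A - b / (A + e) = b * e / (A * (A + e)) by field; rewrite !gt_eqF.
  have -> : b * e = g / 2 * (A * A) by rewrite /e; field; rewrite gt_eqF.
  by rewrite ler_pdivrMr ?mulr_gt0 // ler_pM2l // ler_pM2l // lerDl ltW.
have fdf' :
    \forall t \near +oo, is_derive (t : R) 1 f (df t) /\ b - (A + e) * f t <= df t.
  by near=> t; split; near: t; [exact: fd | exact: fdf].
have := @eventually_gt_of_derive_ge f df b (A + e) (g / 2) Ae0 g20 fdf'.
by apply: filterS => t; lra.
Unshelve. all: by end_near.
Qed.

Lemma limsup_pinfty_lt f a : (limsup_pinfty f <= a%:E)%E ->
  forall e, 0 < e -> \forall t \near +oo, f t < a + e.
Proof.
move=> fa e e0.
have : (limsup_pinfty f < (a + e)%:E)%E by apply: le_lt_trans fa _; rewrite lte_fin ltrDl.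
rewrite /limsup_pinfty limf_esupE => /ereal_inf_lt[_ [V [M [_ MV]] <-]] supV.
exists M; split; first exact: num_real.
move=> t /MV Vt; rewrite -lte_fin; apply: le_lt_trans supV.
by apply: le_ereal_sup_tmp; exists (f t)%:E => //; exists t.
Qed.

Lemma liminf_pinfty_ge f a : (forall e, 0 < e -> \forall t \near +oo, a - e < f t) ->
  (a%:E <= liminf_pinfty f)%E.
Proof.
move=> fa; apply/lee_subgt0Pr => e e0.
have [M [_ fM]] := fa e e0.
rewrite /liminf_pinfty limf_einfE; apply: le_ereal_sup_tmp.
exists (ereal_inf [set (f t)%:E | t in [set t | M < t]]).
  by exists [set t | M < t] => //; exists M; split; first exact: num_real.
by apply: le_ereal_inf_tmp => _ [t /fM ft <-]; rewrite -EFinD lee_fin ltW.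
Qed.

Lemma ratio_ge (x y X Y d : R) : 0 < Y -> X <= Y -> 0 < d -> 0 < x -> 0 < y ->
  X - d * Y / 2 < x -> y < Y + d * Y / 2 -> X / Y - d <= x / y.
Proof.
move=> Y0 XY d0 x0 y0 xX yY; rewrite ler_pdivlMr //.
set k := X / Y - d.
have k1 : k < 1.
  have : X / Y <= 1 by rewrite ler_pdivrMr ?mul1r.
  rewrite /k; lra.
have [k_le0|k_gt0] := leP k 0.
  by apply: le_trans (ltW x0); rewrite mulr_le0_ge0 // ltW.
have kY : k * Y = X - d * Y by rewrite /k mulrBl divfK ?gt_eqF.
have : k * y <= k * (Y + d * Y / 2) by rewrite ler_pM2l // ltW.
have : k * (d * Y / 2) <= d * Y / 2 by rewrite ger_pMl ?ltW // divr_gt0 ?mulr_gt0.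
rewrite mulrDr kY; lra.
Qed.

End comparison.

Section equilibrium.
Variables (R : realType) (bh bv muh muv Cvh Chv Shs Ihs Svs Ivs : R).
Hypothesis equilibrium : is_equilibrium bh bv muh muv Cvh Chv Shs Ihs Svs Ivs.
Hypotheses (bv_gt0 : 0 < bv) (muh_gt0 : 0 < muh) (muv_gt0 : 0 < muv).
Hypotheses (Cvh_gt0 : 0 < Cvh) (Chv_gt0 : 0 < Chv) (Shs_gt0 : 0 < Shs) (Svs_gt0 : 0 < Svs).

Lemma equilibrium_Sv_lt I : 0 <= I -> I < Ihs -> Svs < bv / (Chv * I + muv).
Proof.
case: equilibrium => _ _ eqSv _ I_ge0 I_lt.
have I_den : 0 < Chv * I + muv.
  by rewrite (lt_le_trans muv_gt0) // lerDr mulr_ge0 // ltW.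
rewrite ltr_pdivlMr //.
have : Chv * Svs * I < Chv * Svs * Ihs by rewrite ltr_pM2l ?mulr_gt0.
lra.
Qed.

Lemma equilibrium_Nv : Svs + Ivs = bv / muv.
Proof.
case: equilibrium => _ _ eqSv eqIv.
by apply: (mulIf (lt0r_neq0 muv_gt0)); rewrite divfK ?lt0r_neq0 //; lra.
Qed.

Lemma equilibrium_Sh_lt Svb : Svs < Svb -> Svb <= bv / muv ->
  Shs < bh / (Cvh * (1 - Svb / (bv / muv)) + muh).
Proof.
move=> Svs_lt Svb_le; have S0_gt0 : 0 < bv / muv by rewrite divr_gt0.
have ratio : Ivs / (Svs + Ivs) = 1 - Svs / (bv / muv).
  rewrite equilibrium_Nv -[X in X / _](addKr Svs) equilibrium_Nv.
  by field; rewrite !lt0r_neq0.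
have Svb_ratio : Svb / (bv / muv) <= 1 by rewrite ler_pdivrMr ?mul1r.
have D_gt0 : 0 < Cvh * (1 - Svb / (bv / muv)) + muh.
  by rewrite (lt_le_trans muh_gt0) // lerDr mulr_ge0 ?subr_ge0 // ltW.
have : Shs * (Cvh * (1 - Svb / (bv / muv)) + muh) <
       Shs * (Cvh * (1 - Svs / (bv / muv)) + muh).
  by rewrite ltr_pM2l // ltrD2r ltr_pM2l // ltrD2l ltrN2 ltr_pM2r ?invr_gt0.
case: equilibrium => eqSh _ _ _; rewrite ltr_pdivlMr // -ratio; lra.
Qed.
End equilibrium.

Arguments equilibrium_Sv_lt {R bh bv muh muv Cvh Chv Shs Ihs Svs Ivs}.
Arguments equilibrium_Sh_lt {R bh bv muh muv Cvh Chv Shs Ihs Svs Ivs}.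

Section host_vector_model.
Variables (R : realType) (bh bv muh muv Cvh Chv : R) (Sh Ih Sv Iv : R -> R).
Implicit Types t s : R.
Hypotheses (bh_gt0 : 0 < bh) (bv_gt0 : 0 < bv) (muh_gt0 : 0 < muh) (muv_gt0 : 0 < muv).
Hypotheses (Cvh_gt0 : 0 < Cvh) (Chv_gt0 : 0 < Chv).
Hypotheses (Sh_cont : {within `[0, +oo[, continuous Sh})
  (Ih_cont : {within `[0, +oo[, continuous Ih})
  (Sv_cont : {within `[0, +oo[, continuous Sv})
  (Iv_cont : {within `[0, +oo[, continuous Iv}).
Hypotheses (Sh0_ge0 : 0 <= Sh 0) (Sv0_ge0 : 0 <= Sv 0) (Nv0_gt0 : 0 < Sv 0 + Iv 0).
Hypothesis Sh_derive : forall t, 0 < t ->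
  is_derive t 1 Sh (bh - Cvh * (Iv t / (Sv t + Iv t)) * Sh t - muh * Sh t).
Hypothesis Sv_derive : forall t, 0 < t ->
  is_derive t 1 Sv (bv - Chv * Ih t * Sv t - muv * Sv t).
Hypothesis Iv_derive : forall t, 0 < t ->
  is_derive t 1 Iv (Chv * Ih t * Sv t - muv * Iv t).

Let Nv t := Sv t + Iv t.
Let S0 := bv / muv.

Lemma Nv_derive t : 0 < t -> is_derive t 1 Nv (bv - muv * Nv t).
Proof.
move=> t0; have NvD := is_deriveD (Sv_derive _ t0) (Iv_derive _ t0).
by apply: (is_derive_eq NvD); rewrite /Nv; ring.
Qed.

Lemma Nv_gt0 t : 0 < t -> 0 < Nv t.
Proof.
apply: (@inflow_gt0 _ Nv (cst muv) bv 0) => //; first exact: within_continuousD.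
- exact: ltW.
- by move=> s s0; apply: Nv_derive.
- by move=> s _; exact: cst_continuous.
- exact: (cvgP muv (cvg_cst muv)).
Qed.

Lemma Sv_gt0 t : 0 < t -> 0 < Sv t.
Proof.
have [Ih_in Ih_0] := (continuous_within_itvcyP 0 Ih).1 Ih_cont.
apply: (@inflow_gt0 _ Sv (fun t => Chv * Ih t + muv) bv 0) => //.
- move=> s s0; apply: is_derive_eq (Sv_derive _ s0) _; ring.
- by move=> s /Ih_in Ihs; exact: cvgD (cvgM (cvg_cst Chv) Ihs) (cvg_cst muv).
- exact: cvgP (cvgD (cvgM (cvg_cst Chv) Ih_0) (cvg_cst muv)).
Qed.

Lemma Sh_gt0 t : 0 < t -> 0 < Sh t.
Proof.
have [Sv_in Sv_0] := (continuous_within_itvcyP 0 Sv).1 Sv_cont.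
have [Iv_in Iv_0] := (continuous_within_itvcyP 0 Iv).1 Iv_cont.
apply: (@inflow_gt0 _ Sh (fun t => Cvh * (Iv t / Nv t) + muh) bh 0) => //.
- by move=> s s0; apply: is_derive_eq (Sh_derive _ s0) _; rewrite /Nv; ring.
- move=> s s0; have Nvs0 : Nv s != 0.
    by rewrite gt_eqF // Nv_gt0 //; move: s0; rewrite in_itv andbT.
  apply: cvgD; last exact: cvg_cst.
  apply: cvgM; first exact: cvg_cst.
  apply: cvgM; first exact: Iv_in.
  by apply: cvgV => //; apply: cvgD; [exact: Sv_in | exact: Iv_in].
- apply: (cvgP (Cvh * (Iv 0 / Nv 0) + muh)); apply: cvgD; last exact: cvg_cst.
  apply: cvgM; first exact: cvg_cst.
  by apply: cvgM; [exact: Iv_0 | apply: cvgV; [exact: lt0r_neq0 | exact: cvgD]].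
Qed.

Let near_pinfty_gt0 : \forall t \near +oo, 0 < (t : R).
Proof. exact: nbhs_pinfty_gt (num_real 0). Qed.

Lemma Nv_lt e : 0 < e -> \forall t \near +oo, Nv t < S0 + e.
Proof.
move=> e0.
have : \forall t \near +oo, - bv / muv - e < - Nv t.
  apply: (@eventually_gt_of_derive_ge _ (fun t => - Nv t)
    (fun t => - (bv - muv * Nv t))) => //.
  near=> t; split; last by lra.
  by apply: is_deriveN; apply: Nv_derive; near: t; exact: near_pinfty_gt0.
by apply: filterS => t; rewrite /S0 mulNr; lra.
Unshelve. all: by end_near.
Qed.

Variable Ih_sup : R.
Hypotheses (Ih_sup_ge0 : 0 <= Ih_sup) (Ih_limsup : (limsup_pinfty Ih <= Ih_sup%:E)%E).

Let Svbar := bv / (Chv * Ih_sup + muv).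

Lemma Svbar_le : Svbar <= S0.
Proof.
have X0 : 0 < Chv * Ih_sup + muv.
  by rewrite (lt_le_trans muv_gt0) // lerDr mulr_ge0 // ltW.
rewrite /Svbar ler_pdivrMr // mulrDr /S0 divfK ?gt_eqF // lerDr.
by rewrite mulr_ge0 ?divr_ge0 ?mulr_ge0 ?(ltW bv_gt0) ?(ltW muv_gt0) ?(ltW Chv_gt0).
Qed.

Lemma Sv_gt g : 0 < g -> \forall t \near +oo, Svbar - g < Sv t.
Proof.
apply: (@eventually_gt_of_derive_ge_approx _ _
  (fun t => bv - Chv * Ih t * Sv t - muv * Sv t)).
- by [].
- by rewrite (lt_le_trans muv_gt0) // lerDr mulr_ge0 // ltW.
- by near=> t; apply: Sv_derive; near: t; exact: near_pinfty_gt0.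
move=> e e0; near=> t.
have Ih_lt : Ih t < Ih_sup + e / Chv.
  by near: t; apply: limsup_pinfty_lt; rewrite ?divr_gt0.
have Svt : 0 < Sv t by apply: Sv_gt0; near: t; exact: near_pinfty_gt0.
have : Chv * Ih t < Chv * Ih_sup + e.
  by rewrite -[e](divfK (lt0r_neq0 Chv_gt0)) [_ / _ * _]mulrC -mulrDr ltr_pM2l.
rewrite -(ltr_pM2r Svt); lra.
Unshelve. all: by end_near.
Qed.

Lemma Iv_ratio_le d : 0 < d ->
  \forall t \near +oo, Iv t / Nv t <= 1 - Svbar / S0 + d.
Proof.
move=> d0; have S0_gt0 : 0 < S0 by rewrite /S0 divr_gt0.
near=> t.
have : Svbar / S0 - d <= Sv t / Nv t.
  apply: ratio_ge => //; first exact: Svbar_le.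
  - by apply: Sv_gt0; near: t; exact: near_pinfty_gt0.
  - by apply: Nv_gt0; near: t; exact: near_pinfty_gt0.
  - by near: t; apply: Sv_gt; rewrite divr_gt0 // mulr_gt0.
  - by near: t; apply: Nv_lt; rewrite divr_gt0 // mulr_gt0.
have Nvt : 0 < Nv t by apply: Nv_gt0; near: t; exact: near_pinfty_gt0.
have -> : Iv t / Nv t = 1 - Sv t / Nv t by rewrite /Nv; field; rewrite lt0r_neq0.
lra.
Unshelve. all: by end_near.
Qed.

Lemma Sh_gt g : 0 < g ->
  \forall t \near +oo, bh / (Cvh * (1 - Svbar / S0) + muh) - g < Sh t.
Proof.
have ratio_le1 : Svbar / S0 <= 1 by rewrite ler_pdivrMr ?mul1r ?divr_gt0 ?Svbar_le.
apply: (@eventually_gt_of_derive_ge_approx _ _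
  (fun t => bh - Cvh * (Iv t / (Sv t + Iv t)) * Sh t - muh * Sh t)).
- by [].
- by rewrite (lt_le_trans muh_gt0) // lerDr mulr_ge0 ?subr_ge0 // ltW.
- by near=> t; apply: Sh_derive; near: t; exact: near_pinfty_gt0.
move=> e e0; near=> t.
have ratio : Iv t / Nv t <= 1 - Svbar / S0 + e / Cvh.
  by near: t; apply: Iv_ratio_le; rewrite divr_gt0.
have Sht : 0 < Sh t by apply: Sh_gt0; near: t; exact: near_pinfty_gt0.
have : Cvh * (Iv t / Nv t) <= Cvh * (1 - Svbar / S0) + e.
  by rewrite -[e](divfK (lt0r_neq0 Cvh_gt0)) [_ / _ * _]mulrC -mulrDr ler_pM2l.
rewrite -(ler_pM2r Sht) /Nv; lra.
Unshelve. all: by end_near.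
Qed.
End host_vector_model.

Lemma solution_on_halfline {R : realType} {bh bv muh muv Cvh Chv tau : R}
    {p1 p2 p3 p4 Sh Ih Sv Iv : R -> R} :
  0 <= tau -> in_D tau p1 p2 p3 p4 ->
  is_solution bh bv muh muv Cvh Chv tau p1 p2 p3 p4 Sh Ih Sv Iv ->
  [/\ [/\ {within `[0, +oo[, continuous Sh}, {within `[0, +oo[, continuous Ih},
          {within `[0, +oo[, continuous Sv} & {within `[0, +oo[, continuous Iv}],
      [/\ 0 <= Sh 0, 0 <= Sv 0 & 0 < Sv 0 + Iv 0]
    & [/\ forall t : R, 0 < t ->
            is_derive t 1 Sh (bh - Cvh * (Iv t / (Sv t + Iv t)) * Sh t - muh * Sh t),
          forall t : R, 0 < t -> is_derive t 1 Sv (bv - Chv * Ih t * Sv t - muv * Sv t)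
        & forall t : R, 0 < t -> is_derive t 1 Iv (Chv * Ih t * Sv t - muv * Iv t)]].
Proof.
move=> tau_ge0 [_ p_ge0 _] [init [Sh_c Ih_c Sv_c Iv_c] derivs].
have tau0 : - tau <= (0 : R) <= 0 by rewrite lexx oppr_le0 tau_ge0.
have [-> _ -> ->] := init 0 tau0.
have [p1_ge0 [_ [p3_ge0 [_ p34_gt0]]]] := p_ge0 0 tau0.
have restrict (f : R -> R) :
    {within `[- tau, +oo[, continuous f} -> {within `[0, +oo[, continuous f}.
  apply: continuous_subspaceW => x /=; rewrite !in_itv /= !andbT; apply: le_trans.
  by rewrite oppr_le0.
by split; [split; exact: restrict | | split=> t /derivs[]].
Qed.

Theorem lemma2 (R : realType) (bh bv muh muv Cvh Chv tau : R)
  (hbh : 0 < bh) (hbv : 0 < bv) (hmuh : 0 < muh) (hmuv : 0 < muv)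
  (hCvh : 0 < Cvh) (hChv : 0 < Chv) (htau : 0 <= tau)
  (hR0 : 1 < R0 bh muh muv Cvh Chv)
  (Shs Ihs Svs Ivs : R)
  (hEpos : [/\ 0 < Shs, 0 < Ihs, 0 < Svs & 0 < Ivs])
  (hEeq : is_equilibrium bh bv muh muv Cvh Chv Shs Ihs Svs Ivs)
  (theta : R) (htheta : 0 < theta < 1)
  (p1 p2 p3 p4 : R -> R) (hD : in_D tau p1 p2 p3 p4)
  (Sh Ih Sv Iv : R -> R)
  (hsol : is_solution bh bv muh muv Cvh Chv tau p1 p2 p3 p4 Sh Ih Sv Iv)
  (hlimsup : (limsup_pinfty Ih <= (theta * Ihs)%:E)%E) :
  let Svbar := bv / (theta * Chv * Ihs + muv) in
  let Shbar := bh / (Cvh * (1 - Svbar / (bv / muv)) + muh) in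
  [/\ (liminf_pinfty Sv >= Svbar%:E)%E, Svbar > Svs,
      (liminf_pinfty Sh >= Shbar%:E)%E & Shbar > Shs].
Proof.
move=> Svbar Shbar.
case: hEpos => Shs_gt0 Ihs_gt0 Svs_gt0 _; case/andP: htheta => theta_gt0 theta_lt1.
have [[Sh_c Ih_c Sv_c Iv_c] [Sh0 Sv0 Nv0] [Sh_d Sv_d Iv_d]] :=
  solution_on_halfline htau hD hsol.
have I_ge0 : 0 <= theta * Ihs by rewrite mulr_ge0 ?ltW.
have I_lt : theta * Ihs < Ihs by rewrite gtr_pMl.
have Svbar_eq : Svbar = bv / (Chv * (theta * Ihs) + muv) by rewrite /Svbar mulrCA mulrA.
have Svs_lt : Svs < Svbar by rewrite Svbar_eq; apply: (equilibrium_Sv_lt hEeq).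
split => //.
- apply: liminf_pinfty_ge => g g0; rewrite Svbar_eq.
  by apply: (@Sv_gt _ bv muv Chv Ih Sv).
- apply: liminf_pinfty_ge => g g0; rewrite /Shbar Svbar_eq.
  by apply: (@Sh_gt _ bh bv muh muv Cvh Chv Sh Ih Sv Iv).
- by apply: (equilibrium_Sh_lt hEeq) => //; rewrite Svbar_eq; exact: Svbar_le.
Qed.
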